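(* Let $P$ be a program over a propositional signature $\Sigma$. Then $NF(P)$ is in normal form, and $NF(P)$ is strongly equivalent to $P$.
   Context: A program over $\Sigma$ is a finite set of rules $r$ of the form $a_1\vee\dots\vee a_k\leftarrow b_1,\dots,b_l,\ not\,c_1,\dots,not\,c_m,\ not\,not\,d_1,\dots,not\,not\,d_n$ with all atoms in $\Sigma$ and $k,l,m,n\ge 0$. Write $H(r)=\{a_1,\dots,a_k\}$, $B^+(r)=\{b_1,\dots,b_l\}$, $B^-(r)=\{c_1,\dots,c_m\}$, $B^{--}(r)=\{d_1,\dots,d_n\}$, and $B(r)=B^+(r)\cup\{not\,c: c\in B^-(r)\}\cup\{not\,not\,d: d\in B^{--}(r)\}$ (the body; its elements are called literals). For $I\subseteq\Sigma$, the reduct is $P^I=\{H(r)\leftarrow B^+(r): r\in P,\ B^-(r)\cap I=\emptyset,\ B^{--}(r)\subseteq I\}$. A set $I$ classically satisfies $r$ if $B^+(r)\subseteq I$, $B^-(r)\cap I=\emptyset$ and $B^{--}(r)\subseteq I$ together imply $H(r)\cap I\neq\emptyset$. An HT-interpretation $\langle X,Y\rangle$ with $X\subseteq Y$ is an HT-model of $P$ if $Y$ classically satisfies every rule of $P$ and $X$ classically satisfies every rule of $P^Y$. $Y$ is an answer set of $P$ if $\langle Y,Y\rangle$ is an HT-model of $P$ and no $\langle X,Y\rangle$ with $X\subsetneq Y$ is. $AS(P)$ denotes the set of answer sets. Programs $P_1,P_2$ are strongly equivalent if $AS(P_1\cup R)=AS(P_2\cup R)$ for every program $R$. A rule $r$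 is tautological if $H(r)\cap B^+(r)\ne\emptyset$, or $B^+(r)\cap B^-(r)\ne\emptyset$, or $B^-(r)\cap B^{--}(r)\ne\emptyset$. A rule $r\in P$ is minimal in $P$ if there is no $r'\in P$ with ($H(r')\subseteq H(r)$ and $B(r')\subsetneq B(r)$) or ($H(r')\subsetneq H(r)$ and $B(r')\subseteq B(r)$). $P$ is in normal form if: (i) for every atom $a$ and every $r\in P$, at most one of $a$, $not\,a$, $not\,not\,a$ is in $B(r)$; (ii) if $a\in H(r)$ then neither $a$ nor $not\,a$ is in $B(r)$; (iii) every rule of $P$ is minimal in $P$. The program $NF(P)$ is obtained from $P$ by: 1. removing all tautological rules; 2. in each remaining rule $r$, removing from $B^{--}(r)$ every atom that is in $B^+(r)$; 3. in each remaining rule $r$, removing from $H(r)$ every atom that is in $B^-(r)$; 4. removing from the resulting program all rules that are not minimal in it. *)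

From HB Require Import structures.
From mathcomp Require Import all_boot.
From mathcomp Require Import finmap.

Set Implicit Arguments.
Unset Strict Implicit.
Unset Printing Implicit Defensive.

Local Open Scope fset_scope.

(* A rule  H <- B+, not B-, not not B--  over the signature A,
   encoded as the quadruple (H, B+, B-, B--) of finite sets of atoms. *)
Definition rule (A : choiceType) : Type :=
  ({fset A} * {fset A} * {fset A} * {fset A})%type.

Definition program (A : choiceType) : Type := {fset rule A}.

Definition mkrule (A : choiceType) (h bp bn bnn : {fset A}) : rule A :=
  (h, bp, bn, bnn).
Definition H (A : choiceType) (r : rule A) : {fset A} := r.1.1.1.
Definition Bp (A : choiceType) (r : rule A) : {fset A} := r.1.1.2.
Definition Bn (A : choiceType) (r : rule A) : {fset A} := r.1.2.
Definition Bnn (A : choiceType) (r : rule A) : {fset A} := r.2.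

(* Literals: inl (inl a) = a, inl (inr a) = not a, inr a = not not a. *)
Definition literal (A : choiceType) : Type := ((A + A) + A)%type.

Definition body (A : choiceType) (r : rule A) : {fset literal A} :=
  [fset (inl (inl a) : literal A) | a in Bp r]
  `|` [fset (inl (inr a) : literal A) | a in Bn r]
  `|` [fset (inr a : literal A) | a in Bnn r].

Definition interp (A : choiceType) : Type := A -> Prop.

Definition subI (A : choiceType) (X Y : interp A) : Prop :=
  forall a, X a -> Y a.
Definition proper_subI (A : choiceType) (X Y : interp A) : Prop :=
  subI X Y /\ exists a, Y a /\ ~ X a.

Definition sat (A : choiceType) (I : interp A) (r : rule A) : Prop :=
  (forall b, b \in Bp r -> I b) ->
  (forall c, c \in Bn r -> ~ I c) ->
  (forall d, d \in Bnn r -> I d) ->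
  exists2 a, a \in H r & I a.

(* Membership in the reduct P^I = { H(r) <- B+(r) : r in P,
   B-(r) disjoint from I, B--(r) subset of I }. *)
Definition reduct (A : choiceType) (P : program A) (I : interp A)
    (r' : rule A) : Prop :=
  exists2 r, r \in P &
    [/\ (forall c, c \in Bn r -> ~ I c),
        (forall d, d \in Bnn r -> I d) &
        r' = mkrule (H r) (Bp r) fset0 fset0].

Definition HT_model (A : choiceType) (P : program A) (X Y : interp A) : Prop :=
  [/\ subI X Y,
      (forall r, r \in P -> sat Y r) &
      (forall r, reduct P Y r -> sat X r)].

Definition answer_set (A : choiceType) (P : program A) (Y : interp A) : Prop :=
  HT_model P Y Y /\ ~ (exists X, proper_subI X Y /\ HT_model P X Y).

Definition strongly_equivalent (A : choiceType) (P1 P2 : program A) : Prop :=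
  forall (R : program A) (Y : interp A),
    answer_set (P1 `|` R) Y <-> answer_set (P2 `|` R) Y.

Definition tautological (A : choiceType) (r : rule A) : bool :=
  [|| H r `&` Bp r != fset0, Bp r `&` Bn r != fset0 | Bn r `&` Bnn r != fset0].

Definition minimal_in (A : choiceType) (P : program A) (r : rule A) : bool :=
  all (fun r' : rule A =>
         ~~ (((H r' `<=` H r) && (body r' `<` body r))
             || ((H r' `<` H r) && (body r' `<=` body r))))
      (enum_fset P).

Definition normal_form (A : choiceType) (P : program A) : Prop :=
  forall r, r \in P ->
    [/\ (forall a, ~~ ((a \in Bp r) && (a \in Bn r))
                   /\ ~~ ((a \in Bp r) && (a \in Bnn r))
                   /\ ~~ ((a \in Bn r) && (a \in Bnn r))),
        (forall a, a \in H r -> (a \notin Bp r) && (a \notin Bn r)) &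
        minimal_in P r].

Definition NF_step1 (A : choiceType) (P : program A) : program A :=
  [fset r in P | ~~ tautological r].
Definition NF_step2 (A : choiceType) (P : program A) : program A :=
  [fset mkrule (H r) (Bp r) (Bn r) (Bnn r `\` Bp r) | r in P].
Definition NF_step3 (A : choiceType) (P : program A) : program A :=
  [fset mkrule (H r `\` Bn r) (Bp r) (Bn r) (Bnn r) | r in P].
Definition NF_step4 (A : choiceType) (P : program A) : program A :=
  [fset r in P | minimal_in P r].
Definition NF (A : choiceType) (P : program A) : program A :=
  NF_step4 (NF_step3 (NF_step2 (NF_step1 P))).

From mathcomp Require Import all_boot finmap.

Set Implicit Arguments.
Unset Strict Implicit.
Unset Printing Implicit Defensive.

Local Open Scope fset_scope.

(* HT-models are checked rule by rule, and programs with the same HT-models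
   keep the same HT-models, hence the same answer sets, after adding any R.
   So it suffices that each step of NF preserves HT-models: tautological rules
   hold in every HT-interpretation; the rewrites of steps 2 and 3 do not change
   which HT-interpretations satisfy a rule; and a rule discarded in step 4 is
   subsumed (smaller head and body) by a minimal rule, found by descent on the
   size of head plus body, which entails it. *)

Lemma forall_in_fsetU (T : choiceType) (S1 S2 : {fset T}) (Phi : T -> Prop) :
  (forall x, x \in S1 `|` S2 -> Phi x) <->
  (forall x, x \in S1 -> Phi x) /\ (forall x, x \in S2 -> Phi x).
Proof.
split=> [h|[h1 h2] x]; first by split=> x hx; apply: h; rewrite inE hx ?orbT.
by rewrite inE => /orP[]; [apply: h1 | apply: h2].
Qed.

Section HereAndThere.

Variable A : choiceType.
Implicit Types (P Q R : program A) (r : rule A) (X Y : interp A).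

Definition ht_sat X Y r : Prop :=
  sat Y r /\
  ((forall c, c \in Bn r -> ~ Y c) -> (forall d, d \in Bnn r -> Y d) ->
   (forall b, b \in Bp r -> X b) -> exists2 a, a \in H r & X a).

Lemma HT_modelE P X Y :
  HT_model P X Y <-> subI X Y /\ forall r, r \in P -> ht_sat X Y r.
Proof.
split=> [[sXY satY satX]|[sXY htP]].
  split=> // r rP; split; first exact: satY.
  move=> hn hnn hp; have /satX : reduct P Y (mkrule (H r) (Bp r) fset0 fset0).
    by exists r.
  by apply=> // ?; rewrite in_fset0.
split=> // [r /htP[]|_ [r /htP[_ htr] [hn hnn ->]]] //.
by move=> hp _ _; exact: htr.
Qed.

Definition ht_equiv P Q := forall X Y, subI X Y ->
  (forall r, r \in P -> ht_sat X Y r) <-> (forall r, r \in Q -> ht_sat X Y r).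

Lemma ht_equiv_sym P Q : ht_equiv P Q -> ht_equiv Q P.
Proof. by move=> e X Y s; rewrite (e X Y s). Qed.

Lemma ht_equiv_trans P Q R : ht_equiv P Q -> ht_equiv Q R -> ht_equiv P R.
Proof. by move=> e1 e2 X Y s; rewrite (e1 X Y s) (e2 X Y s). Qed.

Lemma ht_equivU P Q R : ht_equiv P Q -> ht_equiv (P `|` R) (Q `|` R).
Proof. by move=> e X Y s; rewrite !forall_in_fsetU (e X Y s). Qed.

Lemma ht_equiv_HT_model P Q X Y :
  ht_equiv P Q -> HT_model P X Y <-> HT_model Q X Y.
Proof.
move=> e; rewrite !HT_modelE.
by split=> -[s htX]; split=> //; apply/(e X Y s).
Qed.

Lemma answer_set_HT_model P Q Y :
  (forall X, HT_model P X Y <-> HT_model Q X Y) ->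
  answer_set P Y <-> answer_set Q Y.
Proof.
move=> e; rewrite /answer_set e.
by split=> -[mY noX]; split=> // -[X [pX mX]]; apply: noX; exists X; split=> //;
  apply/e.
Qed.

Lemma ht_equiv_strongly_equivalent P Q :
  ht_equiv P Q -> strongly_equivalent P Q.
Proof.
move=> e R Y; apply: answer_set_HT_model => X.
exact/ht_equiv_HT_model/ht_equivU.
Qed.

Lemma ht_equiv_sep P (p : pred (rule A)) :
  (forall X Y r, subI X Y -> r \in P -> ~~ p r ->
     (forall r', r' \in [fset x in P | p x] -> ht_sat X Y r') ->
     ht_sat X Y r) ->
  ht_equiv P [fset x in P | p x].
Proof.
move=> entailed X Y s; split=> htP r; first by rewrite inE => /andP[/htP].
move=> rP; case pr: (p r); first by apply: htP; rewrite !inE rP pr.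
by apply: entailed; rewrite ?pr.
Qed.

Lemma ht_equiv_imfset (f : rule A -> rule A) P :
  (forall X Y r, subI X Y -> ht_sat X Y (f r) <-> ht_sat X Y r) ->
  ht_equiv P [fset f r | r in P].
Proof.
move=> ef X Y s; split=> htP r.
  by case/imfsetP=> r0 r0P ->; apply/ef/htP.
by move=> rP; apply/(ef X Y r s)/htP; rewrite in_imfset.
Qed.

Lemma tautological_ht_sat X Y r : subI X Y -> tautological r -> ht_sat X Y r.
Proof.
move=> s /or3P[] /fset0Pn[a]; rewrite in_fsetI => /andP[h1 h2].
- by split=> [hp _ _|_ _ hp]; exists a => //; apply: hp.
- by split=> [hp hn _|hn _ hp]; case: (hn a h2); [|apply: s]; apply: hp.
- by split=> [_ hn hnn|hn hnn _]; case: (hn a h1); apply: hnn.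
Qed.

(* Removing from B-- the atoms of B+ is harmless because X, hence Y, already
   contains them whenever the reduct applies. *)
Lemma ht_sat_Bnn_setD_Bp X Y r : subI X Y ->
  ht_sat X Y (mkrule (H r) (Bp r) (Bn r) (Bnn r `\` Bp r)) <-> ht_sat X Y r.
Proof.
move=> s; rewrite /ht_sat /sat /H /Bp /Bn /Bnn /=.
have Bnn_setD (Z : interp A) : (forall d, d \in r.1.1.2 -> Z d) ->
    (forall d, d \in r.2 `\` r.1.1.2 -> Z d) -> forall d, d \in r.2 -> Z d.
  move=> hp hnn d hd; case: (boolP (d \in r.1.1.2)) => [/hp // | nd].
  by apply: hnn; rewrite in_fsetD nd.
have setD_Bnn (Z : interp A) : (forall d, d \in r.2 -> Z d) ->
    forall d, d \in r.2 `\` r.1.1.2 -> Z d.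
  by move=> hnn d; rewrite in_fsetD => /andP[_ /hnn].
split=> -[satY satX]; split.
- by move=> hp hn hnn; apply: satY => //; apply: setD_Bnn.
- by move=> hn hnn hp; apply: satX => //; apply: setD_Bnn.
- by move=> hp hn hnn; apply: satY => //; apply: Bnn_setD.
- move=> hn hnn hp; apply: satX => //.
  by apply: Bnn_setD hnn => d /hp /s.
Qed.

Lemma ht_sat_H_setD_Bn X Y r : subI X Y ->
  ht_sat X Y (mkrule (H r `\` Bn r) (Bp r) (Bn r) (Bnn r)) <-> ht_sat X Y r.
Proof.
move=> s; rewrite /ht_sat /sat /H /Bp /Bn /Bnn /=.
split=> -[satY satX]; split.
- move=> hp hn hnn; case: (satY hp hn hnn) => a.
  by rewrite in_fsetD => /andP[_ ha] Ya; exists a.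
- move=> hn hnn hp; case: (satX hn hnn hp) => a.
  by rewrite in_fsetD => /andP[_ ha] Xa; exists a.
- move=> hp hn hnn; case: (satY hp hn hnn) => a ha Ya; exists a => //.
  by rewrite in_fsetD ha andbT; apply/negP => /hn.
- move=> hn hnn hp; case: (satX hn hnn hp) => a ha Xa; exists a => //.
  by rewrite in_fsetD ha andbT; apply/negP => /hn; apply; apply: s.
Qed.

Lemma in_body_Bp r b : ((inl (inl b) : literal A) \in body r) = (b \in Bp r).
Proof.
rewrite /body !in_fsetU; apply/idP/idP => [|hb]; last by rewrite in_imfset.
by case/orP => [/orP[]|] /imfsetP[x hx] // [->].
Qed.

Lemma in_body_Bn r b : ((inl (inr b) : literal A) \in body r) = (b \in Bn r).
Proof.
rewrite /body !in_fsetU; apply/idP/idP => [|hb]; last first.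
  by rewrite in_imfset ?orbT.
by case/orP => [/orP[]|] /imfsetP[x hx] // [->].
Qed.

Lemma in_body_Bnn r b : ((inr b : literal A) \in body r) = (b \in Bnn r).
Proof.
rewrite /body !in_fsetU; apply/idP/idP => [|hb]; last first.
  by rewrite in_imfset ?orbT.
by case/orP => [/orP[]|] /imfsetP[x hx] // [->].
Qed.

Lemma body_fsubset r' r : body r' `<=` body r ->
  [/\ {subset Bp r' <= Bp r}, {subset Bn r' <= Bn r}
    & {subset Bnn r' <= Bnn r}].
Proof.
move/fsubsetP=> sB; split=> b.
- by rewrite -!in_body_Bp => /sB.
- by rewrite -!in_body_Bn => /sB.
- by rewrite -!in_body_Bnn => /sB.
Qed.

Definition subsumes r' r := (H r' `<=` H r) && (body r' `<=` body r).

Lemma subsumes_trans r1 r2 r3 :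
  subsumes r1 r2 -> subsumes r2 r3 -> subsumes r1 r3.
Proof.
case/andP=> sH12 sB12 /andP[sH23 sB23].
by rewrite /subsumes (fsubset_trans sH12 sH23) (fsubset_trans sB12 sB23).
Qed.

Lemma ht_sat_subsumes X Y r' r :
  subsumes r' r -> ht_sat X Y r' -> ht_sat X Y r.
Proof.
case/andP=> /fsubsetP sH /body_fsubset[sp sn snn] [satY satX].
split=> [hp hn hnn|hn hnn hp].
- case: satY => [b /sp|c /sn|d /snn|a /sH];
    by [apply: hp | apply: hn | apply: hnn | exists a].
- case: satX => [c /sn|d /snn|b /sp|a /sH];
    by [apply: hn | apply: hnn | apply: hp | exists a].
Qed.

Definition rule_size r := (#|` H r| + #|` body r|)%N.

Lemma not_minimal_inP Q r : ~~ minimal_in Q r ->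
  exists2 r', r' \in Q & subsumes r' r && (rule_size r' < rule_size r)%N.
Proof.
case/allPn=> r' r'Q /negPn /orP dom; exists r' => //.
case: dom => /andP[sH sB]; rewrite /subsumes /rule_size.
- rewrite sH (fproper_sub sB) -addnS.
  by rewrite leq_add ?fsubset_leq_card ?fproper_ltn_card.
- rewrite sB (fproper_sub sH) -addSn.
  by rewrite leq_add ?fsubset_leq_card ?fproper_ltn_card.
Qed.

Lemma exists_minimal_subsumes Q r : r \in Q ->
  exists2 r', r' \in NF_step4 Q & subsumes r' r.
Proof.
elim: {r}_.+1 {-2}r (ltnSn (rule_size r)) => // n IH r size_r rQ.
have [min_r|/not_minimal_inP[r' r'Q /andP[sub_r' size_r']]] :=
  boolP (minimal_in Q r).
  by exists r; rewrite ?inE ?rQ ?min_r // /subsumes !fsubset_refl.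
have [r'' r''Q sub_r''] := IH r' (leq_trans size_r' size_r) r'Q.
by exists r''; last exact: subsumes_trans sub_r'' sub_r'.
Qed.

Lemma NF_ht_equiv P : ht_equiv P (NF P).
Proof.
apply: (ht_equiv_trans (ht_equiv_sep (p := fun r => ~~ tautological r) _)).
  by move=> X Y r s _ /negPn taut _; apply: tautological_ht_sat.
apply: ht_equiv_trans (ht_equiv_imfset _ (@ht_sat_Bnn_setD_Bp)) _.
apply: ht_equiv_trans (ht_equiv_imfset _ (@ht_sat_H_setD_Bn)) _.
apply: ht_equiv_sep => X Y r s rQ _ htQ.
have [r' r'Q sub_r'] := exists_minimal_subsumes rQ.
exact: ht_sat_subsumes sub_r' (htQ r' r'Q).
Qed.

Lemma minimal_in_fsubset P Q r :
  Q `<=` P -> minimal_in P r -> minimal_in Q r.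
Proof.
by move=> /fsubsetP sQP /allP minP; apply/allP => r' /sQP; apply: minP.
Qed.

Lemma NF_normal_form P : normal_form (NF P).
Proof.
move=> r; rewrite !inE => /andP[/imfsetP[r2 /imfsetP[r1 r1P ->] ->] min_r].
move: r1P; rewrite !inE /tautological !negb_or !negbK !fsetI_eq0.
case/andP=> _ /and3P[/fdisjointP dHp /fdisjointP dpn /fdisjointP dnnn].
rewrite /H /Bp /Bn /Bnn /= in dHp dpn dnnn *; split=> [a|a|].
- rewrite in_fsetD; split; [|split].
  + by apply/andP=> -[/dpn/negP].
  + by case: (a \in r1.1.1.2); rewrite ?andbF.
  + by apply/andP=> -[/dnnn/negP nnn /andP[_]].
- by rewrite in_fsetD => /andP[-> /dHp ->].
- exact: minimal_in_fsubset (fset_sub _ _) min_r.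
Qed.

End HereAndThere.

Theorem proposition1 (A : choiceType) (P : program A) :
  normal_form (NF P) /\ strongly_equivalent (NF P) P.
Proof.
split; first exact: NF_normal_form.
exact/ht_equiv_strongly_equivalent/ht_equiv_sym/NF_ht_equiv.
Qed.
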